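(* Let $\lambda\in\mathbb{R}$ and $f(x)=\lfloor \lambda x\rfloor$ for $x\in\mathbb{R}$. Let $\mathrm{Fix}(f)=\{x\in\mathbb{R}: f(x)=x\}$. Then: 1) If $\lambda\le 0$, then $\mathrm{Fix}(f)=\{0\}$. 2) If $\frac{m-1}{m}<\lambda\le\frac{m}{m+1}$ for some $m\in\mathbb{N}=\{1,2,\dots\}$, then $\mathrm{Fix}(f)=\{0,-1,-2,\dots,-m\}$. 3) If $\lambda=1$, then $\mathrm{Fix}(f)=\mathbb{Z}$. 4) If $\frac{m+1}{m}\le\lambda<\frac{m}{m-1}$ for some $m\in\mathbb{N}$ (for $m=1$ this condition is read as $2\le\lambda<+\infty$), then $\mathrm{Fix}(f)=\{0,1,2,\dots,m-1\}$.
   Context: $\lfloor x\rfloor=\max\{m\in\mathbb{Z}: m\le x\}$ denotes the floor function. Note that the intervals $\left(\frac{m-1}{m},\frac{m}{m+1}\right]$, $m\in\mathbb{N}$, partition $(0,1)$, and the intervals $\left[\frac{m+1}{m},\frac{m}{m-1}\right)$, $m\in\mathbb{N}$ (with the $m=1$ interval being $[2,+\infty)$), partition $(1,+\infty)$. *)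

From Stdlib Require Import Reals ZArith.
Open Scope R_scope.

(* floor x = max {m in Z : m <= x}.  In Stdlib, [up x] is the unique integer
   with x < IZR (up x) <= x + 1, so up x - 1 is the floor. *)
Definition floorR (x : R) : Z := (up x - 1)%Z.

Definition f (lam x : R) : R := IZR (floorR (lam * x)).

Definition Fix (lam : R) (x : R) : Prop := f lam x = x.

(* Fixed points of [x |-> floor (lam x)] are integers [n] with
   [n <= lam n < n + 1].  For [n = k > 0] this reads [1 <= lam] and
   [(lam - 1) k < 1]; for [n = -k < 0] it reads [lam <= 1] and
   [(1 - lam) k < 1].  The hypotheses on [lam] say precisely that the
   relevant slope [c = |lam - 1|] satisfies [c m' < 1 <= c (m' + 1)] for the
   right [m'], and then [c k < 1] holds exactly for [k <= m']. *)
From Pilot Require Import Defs.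
From Stdlib Require Import Reals ZArith Lra Lia Psatz.
Open Scope R_scope.

Lemma floorR_spec (y : R) : IZR (floorR y) <= y < IZR (floorR y) + 1.
Proof.
  unfold floorR. destruct (archimed y) as [Hup Hup1].
  rewrite minus_IZR. lra.
Qed.

Lemma floorR_unique (n : Z) (y : R) : IZR n <= y < IZR n + 1 -> floorR y = n.
Proof.
  intros [Hl Hr]. unfold floorR.
  rewrite <- (tech_up y (n + 1)); rewrite ?plus_IZR; lra || lia.
Qed.

Lemma Fix_iff (lam x : R) :
  Fix lam x <-> (exists n : Z, x = IZR n) /\ x <= lam * x < x + 1.
Proof.
  unfold Fix, Defs.f. split.
  - intros Hx. split.
    + exists (floorR (lam * x)). now symmetry.
    + pose proof (floorR_spec (lam * x)) as Hfloor. now rewrite Hx in Hfloor.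
  - intros [[n ->] Hn]. now rewrite (floorR_unique n).
Qed.

Lemma Fix_0 (lam : R) : Fix lam 0.
Proof. apply Fix_iff. split; [now exists 0%Z | lra]. Qed.

Lemma Fix_INR_iff (lam : R) (k : nat) : (0 < k)%nat ->
  Fix lam (INR k) <-> 1 <= lam /\ (lam - 1) * INR k < 1.
Proof.
  intros Hk. apply lt_0_INR in Hk. rewrite Fix_iff. split.
  - intros [_ Hx]. split; nra.
  - intros Hlam. split; [exists (Z.of_nat k); apply INR_IZR_INZ | nra].
Qed.

Lemma Fix_opp_INR_iff (lam : R) (k : nat) : (0 < k)%nat ->
  Fix lam (- INR k) <-> lam <= 1 /\ (1 - lam) * INR k < 1.
Proof.
  intros Hk. apply lt_0_INR in Hk. rewrite Fix_iff. split.
  - intros [_ Hx]. split; nra.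
  - intros Hlam. split.
    + exists (- Z.of_nat k)%Z. now rewrite opp_IZR, INR_IZR_INZ.
    + nra.
Qed.

Lemma IZR_INR_or_opp_INR (n : Z) : exists k : nat, IZR n = INR k \/ IZR n = - INR k.
Proof.
  exists (Z.abs_nat n). rewrite INR_IZR_INZ, Nat2Z.inj_abs_nat.
  destruct (Z.abs_spec n) as [[_ ->] | [_ ->]]; [left | right]; rewrite ?opp_IZR; lra.
Qed.

Lemma Fix_cases (lam x : R) : Fix lam x ->
  x = 0
  \/ (exists k : nat, (0 < k)%nat /\ x = INR k /\ 1 <= lam /\ (lam - 1) * INR k < 1)
  \/ (exists k : nat, (0 < k)%nat /\ x = - INR k /\ lam <= 1 /\ (1 - lam) * INR k < 1).
Proof.
  intros Hx. pose proof Hx as Hint. apply Fix_iff in Hint.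
  destruct Hint as [[n ->] _].
  destruct (IZR_INR_or_opp_INR n) as [[|k] [Hn | Hn]]; rewrite Hn in Hx |- *.
  - left. reflexivity.
  - left. rewrite INR_0. lra.
  - right; left. exists (S k). rewrite Fix_INR_iff in Hx by lia. intuition lia.
  - right; right. exists (S k). rewrite Fix_opp_INR_iff in Hx by lia. intuition lia.
Qed.

Lemma slope_pos (c : R) (m : nat) : c * INR m < 1 <= c * INR (S m) -> 0 < c.
Proof. rewrite S_INR. lra. Qed.

Lemma mul_INR_lt_1_iff (c : R) (m k : nat) :
  c * INR m < 1 <= c * INR (S m) -> c * INR k < 1 <-> (k <= m)%nat.
Proof.
  intros Hc. pose proof (slope_pos c m Hc) as Hc0. rewrite S_INR in Hc. split.
  - intros Hk. destruct (le_lt_dec k m) as [| Hmk]; [assumption |].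
    apply le_INR in Hmk. rewrite S_INR in Hmk. nra.
  - intros Hkm. apply le_INR in Hkm. nra.
Qed.

Lemma Fix_nonpos_iff (lam x : R) : lam <= 0 -> Fix lam x <-> x = 0.
Proof.
  intros Hlam. split; [| intros ->; apply Fix_0].
  intros Hx. destruct (Fix_cases lam x Hx)
    as [| [[k [_ [_ [Hlam1 _]]]] | [k [Hk [_ [_ Hc]]]]]]; [assumption | lra |].
  apply (le_INR 1) in Hk. rewrite INR_1 in Hk. nra.
Qed.

Lemma Fix_one_iff (x : R) : Fix 1 x <-> exists z : Z, x = IZR z.
Proof.
  rewrite Fix_iff. split.
  - now intros [Hint _].
  - intros Hint. split; [assumption | lra].
Qed.

Lemma Fix_below_one_iff (lam : R) (m : nat) :
  (1 - lam) * INR m < 1 <= (1 - lam) * INR (S m) ->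
  forall x : R, Fix lam x <-> exists k : nat, (k <= m)%nat /\ x = - INR k.
Proof.
  intros Hc x. pose proof (slope_pos _ m Hc) as Hc0. split.
  - intros Hx. destruct (Fix_cases lam x Hx)
      as [-> | [[k [_ [_ [Hlam1 _]]]] | [k [_ [-> [_ Hk]]]]]].
    + exists 0%nat. split; [lia | rewrite INR_0; lra].
    + lra.
    + exists k. split; [now apply (mul_INR_lt_1_iff (1 - lam) m) | reflexivity].
  - intros [[|k] [Hk ->]]; [rewrite INR_0, Ropp_0; apply Fix_0 |].
    apply Fix_opp_INR_iff; [lia |].
    split; [lra | now apply (mul_INR_lt_1_iff (1 - lam) m)].
Qed.

Lemma Fix_above_one_iff (lam : R) (m : nat) :
  (lam - 1) * INR m < 1 <= (lam - 1) * INR (S m) ->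
  forall x : R, Fix lam x <-> exists k : nat, (k <= m)%nat /\ x = INR k.
Proof.
  intros Hc x. pose proof (slope_pos _ m Hc) as Hc0. split.
  - intros Hx. destruct (Fix_cases lam x Hx)
      as [-> | [[k [_ [-> [_ Hk]]]] | [k [_ [_ [Hlam1 _]]]]]].
    + exists 0%nat. split; [lia | now rewrite INR_0].
    + exists k. split; [now apply (mul_INR_lt_1_iff (lam - 1) m) | reflexivity].
    + lra.
  - intros [[|k] [Hk ->]]; [rewrite INR_0; apply Fix_0 |].
    apply Fix_INR_iff; [lia |].
    split; [lra | now apply (mul_INR_lt_1_iff (lam - 1) m)].
Qed.

Lemma below_one_slope (lam : R) (m : nat) : (1 <= m)%nat ->
  (INR m - 1) / INR m < lam <= INR m / (INR m + 1) ->
  (1 - lam) * INR m < 1 <= (1 - lam) * INR (S m).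
Proof.
  intros Hm [Hlo Hhi]. apply (le_INR 1) in Hm. rewrite INR_1 in Hm. rewrite S_INR.
  assert (Elo : (INR m - 1) / INR m * INR m = INR m - 1) by (field; lra).
  assert (Ehi : INR m / (INR m + 1) * (INR m + 1) = INR m) by (field; lra).
  split; nra.
Qed.

Lemma above_one_slope (lam : R) (m : nat) :
  (INR (S m) + 1) / INR (S m) <= lam /\ (S m = 1%nat \/ lam < INR (S m) / (INR (S m) - 1)) ->
  (lam - 1) * INR m < 1 <= (lam - 1) * INR (S m).
Proof.
  rewrite S_INR. intros [Hlo Hhi]. pose proof (pos_INR m) as Hm.
  assert (Elo : (INR m + 1 + 1) / (INR m + 1) * (INR m + 1) = INR m + 1 + 1)
    by (field; lra).
  split; [| nra].
  destruct Hhi as [Hm1 | Hhi].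
  - injection Hm1 as ->. simpl. lra.
  - destruct (Nat.eq_dec m 0) as [-> | Hm0]; [simpl; lra |].
    apply not_0_INR in Hm0.
    assert (Ehi : (INR m + 1) / (INR m + 1 - 1) * INR m = INR m + 1)
      by (field; lra).
    nra.
Qed.

Theorem lemma1 (lam : R) :
  (lam <= 0 -> forall x : R, Fix lam x <-> x = 0)
  /\ (forall m : nat, (1 <= m)%nat ->
        (INR m - 1) / INR m < lam <= INR m / (INR m + 1) ->
        forall x : R, Fix lam x <-> exists k : nat, (k <= m)%nat /\ x = - INR k)
  /\ (lam = 1 -> forall x : R, Fix lam x <-> exists z : Z, x = IZR z)
  /\ (forall m : nat, (1 <= m)%nat ->
        (INR m + 1) / INR m <= lam /\ (m = 1%nat \/ lam < INR m / (INR m - 1)) ->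
        forall x : R, Fix lam x <-> exists k : nat, (k < m)%nat /\ x = INR k).
Proof.
  split; [| split; [| split]].
  - intros Hlam x. now apply Fix_nonpos_iff.
  - intros m Hm Hlam. now apply Fix_below_one_iff, below_one_slope.
  - intros ->. exact Fix_one_iff.
  - intros [|m] Hm Hlam x; [lia |].
    rewrite (Fix_above_one_iff lam m (above_one_slope lam m Hlam)).
    split; intros [k [Hk Hx]]; exists k; split; [lia | assumption | lia | assumption].
Qed.
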